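(* Consider the geometric Brownian motion storage model $dX_0=-\mu X_0\,dt+\sigma X_0\,dW$ on $\mathcal E=(0,\infty)$ with $\mu,\sigma>0$, holding cost $c_0(x)=k_3x$ ($k_3>0$), and any ordering cost $c_1:\{(y,z):0<y\le z\}\to[0,\infty]$ that is continuous, satisfies $c_1\ge k_1>0$, has $c_1(\cdot,z)$ continuously differentiable near $0$ for each $z$ and $c_1(y,\cdot)$ continuously differentiable near $\infty$ for each $y$, and for which $\lim_{y\to0}c_1(y,z)<\infty$ for some $z>0$. Then $\inf\{F_0(y,z):0<y\le z\}=0$ and there is no pair $0<y<z$ minimizing $F_0$; that is, no $(y,z)$ ordering policy attains the infimal $(s,S)$ cost.
   Context: $W$ is a standard Brownian motion, $x_0>0$. Scale density $s(x)=x^{2\mu/\sigma^2}$ and speed density $m(x)=\sigma^{-2}x^{-2-2\mu/\sigma^2}$, with scale measure $dS=s\,dx$ and speed measure $dM=m\,dx$. Define $g_0(x)=\int_{x_0}^x\int_u^\infty2c_0(v)\,dM(v)\,dS(u)$, $\zeta(x)=\int_{x_0}^x2M[u,\infty)\,dS(u)$, and $F_0(y,z)=\frac{c_1(y,z)+g_0(z)-g_0(y)}{\zeta(z)-\zeta(y)}$ for $0<y<z$, $F_0(y,y)=\infty$. For the $(y,z)$ ordering policy (order up to $z$ whenever the level falls to $y$), $F_0(y,z)$ is its long-term average cost. *)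

From Stdlib Require Import Reals Lra ClassicalEpsilon.
Open Scope R_scope.

Inductive ER : Type := Fin : R -> ER | PInf : ER.

Definition ER_le (a b : ER) : Prop :=
  match a, b with
  | Fin x, Fin y => x <= y
  | _, PInf => True
  | PInf, Fin _ => False
  end.

(* Oriented Riemann integral \int_a^b f (value when f is Riemann integrable,
   0 otherwise; RiemannInt does not depend on the integrability proof). *)
Definition Rint (f : R -> R) (a b : R) : R :=
  match excluded_middle_informative (inhabited (Riemann_integrable f a b)) with
  | left H => RiemannInt (epsilon H (fun _ => True))
  | right _ => 0
  end.

Definition is_Rint_inf (f : R -> R) (a L : R) : Prop :=
  forall eps, 0 < eps -> exists B, forall b, B < b -> Rabs (Rint f a b - L) < eps.

Definition Rint_inf (f : R -> R) (a : R) : R :=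
  epsilon (inhabits 0) (fun L => is_Rint_inf f a L).

Definition scale (mu sigma x : R) : R := Rpower x (2 * mu / sigma ^ 2).

Definition speed (mu sigma x : R) : R :=
  / sigma ^ 2 * Rpower x (-2 - 2 * mu / sigma ^ 2).

(* g_0(x) = \int_{x0}^x \int_u^oo 2 c0(v) dM(v) dS(u). *)
Definition g0 (mu sigma : R) (c0 : R -> R) (x0 x : R) : R :=
  Rint (fun u => Rint_inf (fun v => 2 * c0 v * speed mu sigma v) u
                 * scale mu sigma u) x0 x.

(* zeta(x) = \int_{x0}^x 2 M[u,oo) dS(u). *)
Definition zeta (mu sigma x0 x : R) : R :=
  Rint (fun u => 2 * Rint_inf (speed mu sigma) u * scale mu sigma u) x0 x.

Definition F0 (mu sigma : R) (c0 : R -> R) (x0 : R) (c1 : R -> R -> ER)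
  (y z : R) : ER :=
  if Rlt_dec y z then
    match c1 y z with
    | Fin c => Fin ((c + g0 mu sigma c0 x0 z - g0 mu sigma c0 x0 y)
                    / (zeta mu sigma x0 z - zeta mu sigma x0 y))
    | PInf => PInf
    end
  else PInf.

(* Continuity of c1 : {(y,z) : 0 < y <= z} -> [0,oo] (order topology on [0,oo]). *)
Definition c1_continuous (c1 : R -> R -> ER) : Prop :=
  forall y z, 0 < y -> y <= z ->
  match c1 y z with
  | Fin v => forall eps, 0 < eps -> exists delta, 0 < delta /\
      forall y' z', 0 < y' -> y' <= z' -> Rabs (y' - y) < delta -> Rabs (z' - z) < delta ->
      exists v', c1 y' z' = Fin v' /\ Rabs (v' - v) < eps
  | PInf => forall M, exists delta, 0 < delta /\
      forall y' z', 0 < y' -> y' <= z' -> Rabs (y' - y) < delta -> Rabs (z' - z) < delta ->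
      ER_le (Fin M) (c1 y' z')
  end.

Definition c1_C1_near0 (c1 : R -> R -> ER) : Prop :=
  forall z, 0 < z -> exists eps (h h' : R -> R), 0 < eps /\
    forall y, 0 < y < eps -> y <= z ->
      c1 y z = Fin (h y) /\ derivable_pt_lim h y (h' y) /\ continuity_pt h' y.

Definition c1_C1_nearInf (c1 : R -> R -> ER) : Prop :=
  forall y, 0 < y -> exists B (h h' : R -> R),
    forall z, B < z -> y <= z ->
      c1 y z = Fin (h z) /\ derivable_pt_lim h z (h' z) /\ continuity_pt h' z.

Definition c1_finite_limit0 (c1 : R -> R -> ER) (z : R) : Prop :=
  exists L, forall eps, 0 < eps -> exists delta, 0 < delta /\
    forall y, 0 < y < delta -> y <= z ->
      exists v, c1 y z = Fin v /\ Rabs (v - L) < eps.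

(* For geometric Brownian motion with linear holding cost both integrals in F_0 are explicit:
   g_0(x) = (k_3/mu)(x - x_0) is linear and zeta(x) = 2/(sigma^2 + 2 mu) (ln x - ln x_0) is
   logarithmic.  Hence F_0(y,z) = (c_1(y,z) + k_3 (z - y)/mu) / (2/(sigma^2 + 2 mu) (ln z - ln y))
   is positive, while for fixed z and y -> 0 its numerator stays bounded and its denominator
   diverges.  So 0 is the infimum and it is not attained. *)

From Stdlib Require Import Reals Lra ClassicalEpsilon.
From Coquelicot Require Import Coquelicot.
Open Scope R_scope.

Lemma Rint_derive (f G dG : R -> R) (a b : R) :
  (forall x, Rmin a b <= x <= Rmax a b -> derivable_pt_lim G x (dG x)) ->
  (forall x, Rmin a b <= x <= Rmax a b -> continuous dG x) ->
  (forall x, Rmin a b < x < Rmax a b -> f x = dG x) ->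
  Rint f a b = G b - G a.
Proof.
  intros HG HdG Hf.
  assert (H : is_RInt f a b (G b - G a)).
  { apply is_RInt_ext with dG; [intros x Hx; symmetry; auto |].
    apply (is_RInt_derive G dG a b); auto.
    intros x Hx; apply is_derive_Reals; auto. }
  unfold Rint; destruct excluded_middle_informative as [Hi | Hn].
  - rewrite <- RInt_Reals; apply is_RInt_unique; exact H.
  - exfalso; apply Hn; constructor; apply ex_RInt_Reals_0; eexists; exact H.
Qed.

Lemma is_Rint_inf_unique (f : R -> R) (a L1 L2 : R) :
  is_Rint_inf f a L1 -> is_Rint_inf f a L2 -> L1 = L2.
Proof.
  intros H1 H2; destruct (Req_dec L1 L2) as [| Hn]; auto; exfalso.
  assert (He : 0 < Rabs (L1 - L2) / 2) by (pose proof (Rabs_pos_lt (L1 - L2)); lra).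
  destruct (H1 _ He) as [B1 HB1], (H2 _ He) as [B2 HB2].
  set (b := Rmax B1 B2 + 1).
  specialize (HB1 b ltac:(unfold b; pose proof (Rmax_l B1 B2); lra)).
  specialize (HB2 b ltac:(unfold b; pose proof (Rmax_r B1 B2); lra)).
  pose proof (Rabs_triang (L1 - Rint f a b) (Rint f a b - L2)) as Htri.
  replace (L1 - Rint f a b + (Rint f a b - L2)) with (L1 - L2) in Htri by ring.
  rewrite <- Rabs_Ropp in HB1.
  replace (- (Rint f a b - L1)) with (L1 - Rint f a b) in HB1 by ring.
  lra.
Qed.

Lemma Rint_inf_eq (f : R -> R) (a L : R) : is_Rint_inf f a L -> Rint_inf f a = L.
Proof.
  intros HL; apply (is_Rint_inf_unique f a); [| exact HL].
  apply (epsilon_spec (inhabits 0) (fun L => is_Rint_inf f a L)); exists L; exact HL.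
Qed.

Lemma Rpower_opp_lt (p eps b : R) :
  0 < p -> 0 < eps -> Rpower eps (- / p) < b -> Rpower b (- p) < eps.
Proof.
  intros Hp He Hb.
  assert (Hb0 : 0 < b) by (pose proof (exp_pos (- / p * ln eps)); unfold Rpower in Hb; lra).
  assert (Hln : - / p * ln eps < ln b).
  { rewrite <- (ln_exp (- / p * ln eps)); apply ln_increasing; [apply exp_pos | exact Hb]. }
  apply Rmult_lt_compat_l with (r := p) in Hln; [| exact Hp].
  replace (p * (- / p * ln eps)) with (- ln eps) in Hln by (field; lra).
  unfold Rpower; rewrite <- (exp_ln eps) by exact He.
  apply exp_increasing; lra.
Qed.

Lemma is_Rint_inf_Rpower (f : R -> R) (c p u : R) : 0 < p -> 0 < u ->
  (forall v, 0 < v -> f v = c * Rpower v (- p - 1)) ->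
  is_Rint_inf f u (c * Rpower u (- p) / p).
Proof.
  intros Hp Hu Hf.
  assert (Hint : forall b, u < b ->
            Rint f u b = c * Rpower u (- p) / p - c * Rpower b (- p) / p).
  { intros b Hb.
    rewrite (Rint_derive f (fun v => - (c / p) * Rpower v (- p))
                          (fun v => c * Rpower v (- p - 1)) u b); [field; lra | | |];
      intros x Hx; rewrite Rmin_left in Hx by lra.
    - replace (c * Rpower x (- p - 1)) with (- (c / p) * (- p * Rpower x (- p - 1)))
        by (field; lra).
      apply derivable_pt_lim_scal, derivable_pt_lim_power; lra.
    - apply (ex_derive_continuous (K := R_AbsRing) (V := R_NormedModule)).
      eexists; apply is_derive_scal, is_derive_Reals, derivable_pt_lim_power; lra.
    - apply Hf; lra. }
  intros eps He.
  set (eps' := eps * p / (Rabs c + 1)).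
  assert (Hc : 0 <= Rabs c) by apply Rabs_pos.
  assert (He' : 0 < eps') by (apply Rdiv_lt_0_compat; nra).
  exists (Rmax u (Rpower eps' (- / p))); intros b Hb.
  pose proof (Rmax_l u (Rpower eps' (- / p))); pose proof (Rmax_r u (Rpower eps' (- / p))).
  assert (Hsmall : Rpower b (- p) < eps') by (apply Rpower_opp_lt; lra).
  assert (Hpos : 0 < Rpower b (- p)) by apply exp_pos.
  rewrite Hint by lra.
  replace (c * Rpower u (- p) / p - c * Rpower b (- p) / p - c * Rpower u (- p) / p)
    with (- (c * (Rpower b (- p) / p))) by (field; lra).
  rewrite Rabs_Ropp, Rabs_mult, (Rabs_right (Rpower b (- p) / p))
    by (left; apply Rdiv_lt_0_compat; lra).
  apply Rle_lt_trans with ((Rabs c + 1) / p * Rpower b (- p)).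
  - replace (Rabs c * (Rpower b (- p) / p)) with (Rabs c / p * Rpower b (- p)) by (field; lra).
    apply Rmult_le_compat_r; [lra |].
    apply Rmult_le_compat_r; [left; apply Rinv_0_lt_compat; lra | lra].
  - apply Rmult_lt_compat_l with (r := (Rabs c + 1) / p) in Hsmall;
      [| apply Rdiv_lt_0_compat; lra].
    unfold eps' in Hsmall.
    replace ((Rabs c + 1) / p * (eps * p / (Rabs c + 1))) with eps in Hsmall by (field; lra).
    exact Hsmall.
Qed.

Lemma Rint_inf_Rpower (f : R -> R) (c p u : R) : 0 < p -> 0 < u ->
  (forall v, 0 < v -> f v = c * Rpower v (- p - 1)) ->
  Rint_inf f u = c * Rpower u (- p) / p.
Proof. intros; apply Rint_inf_eq, is_Rint_inf_Rpower; auto. Qed.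

Section GeometricBrownianMotion.

Variables mu sigma x0 : R.
Hypothesis mu_gt0 : 0 < mu.
Hypothesis sigma_gt0 : 0 < sigma.
Hypothesis x0_gt0 : 0 < x0.

Let a := 2 * mu / sigma ^ 2.

Let sigma2_gt0 : 0 < sigma ^ 2.
Proof. apply pow_lt; lra. Qed.

Let a_gt0 : 0 < a.
Proof. apply Rdiv_lt_0_compat; lra. Qed.

Let Rpower_opp_a (y : R) : 0 < y -> Rpower y (- a) * Rpower y a = 1.
Proof.
  intros Hy; rewrite <- Rpower_plus; replace (- a + a) with 0 by ring; apply Rpower_O; exact Hy.
Qed.

Lemma zeta_gbm (x : R) : 0 < x ->
  zeta mu sigma x0 x = 2 / (sigma ^ 2 + 2 * mu) * (ln x - ln x0).
Proof.
  intros Hx; set (C := 2 / (sigma ^ 2 + 2 * mu)).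
  assert (Hmin : 0 < Rmin x0 x) by (unfold Rmin; destruct Rle_dec; lra).
  unfold zeta; rewrite (Rint_derive _ (fun v => C * ln v) (fun v => C * / v));
    [ring | | |]; intros y Hy.
  - apply derivable_pt_lim_scal, derivable_pt_lim_ln; lra.
  - apply (ex_derive_continuous (K := R_AbsRing) (V := R_NormedModule)).
    auto_derive; lra.
  - rewrite (Rint_inf_Rpower _ (/ sigma ^ 2) (1 + a)) by
      (try lra; intros v Hv; unfold speed; do 2 f_equal; unfold a; ring).
    unfold scale; fold a.
    replace (- (1 + a)) with (- (1) + - a) by ring.
    rewrite Rpower_plus, (Rpower_Ropp y 1), Rpower_1 by lra.
    replace (2 * (/ sigma ^ 2 * (/ y * Rpower y (- a)) / (1 + a)) * Rpower y a)
      with (2 / (sigma ^ 2 * (1 + a)) * / y * (Rpower y (- a) * Rpower y a))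
      by (field; repeat split; lra).
    rewrite Rpower_opp_a by lra.
    unfold C, a; field; lra.
Qed.

Lemma g0_gbm_linear (k3 x : R) : 0 < x ->
  g0 mu sigma (fun v => k3 * v) x0 x = k3 / mu * (x - x0).
Proof.
  intros Hx; set (D := k3 / mu).
  assert (Hmin : 0 < Rmin x0 x) by (unfold Rmin; destruct Rle_dec; lra).
  unfold g0; rewrite (Rint_derive _ (fun v => D * v) (fun _ => D));
    [unfold D; ring | | |]; intros y Hy.
  - apply is_derive_Reals; auto_derive; [exact I | ring].
  - apply continuous_const.
  - rewrite (Rint_inf_Rpower _ (2 * k3 / sigma ^ 2) a).
    2, 3: lra.
    + unfold scale; fold a.
      replace (2 * k3 / sigma ^ 2 * Rpower y (- a) / a * Rpower y a)
        with (2 * k3 / sigma ^ 2 / a * (Rpower y (- a) * Rpower y a)) by (field; lra).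
      rewrite Rpower_opp_a by lra.
      unfold D, a; field; lra.
    + intros v Hv; unfold speed; fold a.
      replace (- a - 1) with (1 + (-2 - a)) by ring.
      rewrite Rpower_plus, Rpower_1 by exact Hv.
      field; lra.
Qed.

Lemma F0_gbm (k3 : R) (c1 : R -> R -> ER) (y z c : R) :
  0 < y -> y < z -> c1 y z = Fin c ->
  F0 mu sigma (fun v => k3 * v) x0 c1 y z
  = Fin ((c + k3 / mu * (z - y)) / (2 / (sigma ^ 2 + 2 * mu) * (ln z - ln y))).
Proof.
  intros Hy Hyz Hc; unfold F0; destruct (Rlt_dec y z); [| lra].
  rewrite Hc, !g0_gbm_linear, !zeta_gbm by lra.
  f_equal; f_equal; ring.
Qed.

End GeometricBrownianMotion.

Definition ER_pos (e : ER) : Prop := e = PInf \/ exists w, e = Fin w /\ 0 < w.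

Lemma ER_pos_ge0 (e : ER) : ER_pos e -> ER_le (Fin 0) e.
Proof. intros [-> | [w [-> Hw]]]; simpl; lra. Qed.

Lemma ER_pos_inf_not_attained (P : R -> R -> Prop) (F : R -> R -> ER) :
  (forall y z, P y z -> ER_pos (F y z)) ->
  (forall eps, 0 < eps -> exists y z, P y z /\ exists w, F y z = Fin w /\ w < eps) ->
  forall y z, P y z -> exists y' z', P y' z' /\ ~ ER_le (F y z) (F y' z').
Proof.
  intros Hpos Hsmall y z Hyz.
  destruct (Hpos y z Hyz) as [E | [w [E Hw]]].
  - destruct (Hsmall 1 ltac:(lra)) as [y' [z' [Hyz' [w' [E' _]]]]].
    exists y', z'; split; [exact Hyz' |]; rewrite E, E'; simpl; auto.
  - destruct (Hsmall w Hw) as [y' [z' [Hyz' [w' [E' Hw']]]]].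
    exists y', z'; split; [exact Hyz' |]; rewrite E, E'; simpl; lra.
Qed.

Lemma F0_gbm_pos (mu sigma k3 x0 : R) (c1 : R -> R -> ER) :
  0 < mu -> 0 < sigma -> 0 < k3 -> 0 < x0 ->
  (forall y z, 0 < y -> y <= z -> ER_le (Fin 0) (c1 y z)) ->
  forall y z, 0 < y -> y <= z -> ER_pos (F0 mu sigma (fun x => k3 * x) x0 c1 y z).
Proof.
  intros Hmu Hsigma Hk3 Hx0 Hc1 y z Hy Hyz.
  destruct (Rlt_dec y z) as [Hlt | Hge];
    [| left; unfold F0; destruct (Rlt_dec y z); [lra | reflexivity]].
  specialize (Hc1 y z Hy Hyz); destruct (c1 y z) as [c |] eqn:Hc.
  - right; rewrite (F0_gbm mu sigma x0 Hmu Hsigma Hx0 k3 c1 y z c Hy Hlt Hc).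
    eexists; split; [reflexivity |]; simpl in Hc1.
    assert (ln y < ln z) by (apply ln_increasing; lra).
    assert (0 < sigma ^ 2) by (apply pow_lt; lra).
    assert (0 < k3 / mu * (z - y)) by (apply Rmult_lt_0_compat; [apply Rdiv_lt_0_compat |]; lra).
    apply Rdiv_lt_0_compat; [lra |].
    apply Rmult_lt_0_compat; [apply Rdiv_lt_0_compat |]; lra.
  - left; unfold F0; destruct (Rlt_dec y z); [rewrite Hc; reflexivity | lra].
Qed.

Lemma ln_gap_large (M z : R) : 0 < z ->
  exists y0, 0 < y0 < z /\ forall y, 0 < y <= y0 -> M < ln z - ln y.
Proof.
  intros Hz; set (y0 := z * exp (- Rabs M - 1)).
  assert (Hexp : 0 < exp (- Rabs M - 1) < 1).
  { split; [apply exp_pos |]; rewrite <- exp_0 at 2; apply exp_increasing.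
    pose proof (Rabs_pos M); lra. }
  exists y0; split; [unfold y0; split; nra |].
  intros y Hy.
  assert (ln y <= ln y0) by (apply ln_le; lra).
  assert (ln y0 = ln z - Rabs M - 1) by (unfold y0; rewrite ln_mult, ln_exp by lra; ring).
  pose proof (Rle_abs M); lra.
Qed.

Lemma F0_gbm_vanishes (mu sigma k3 x0 : R) (c1 : R -> R -> ER) (z : R) :
  0 < mu -> 0 < sigma -> 0 < x0 -> 0 < z -> c1_finite_limit0 c1 z ->
  forall eps, 0 < eps -> exists y, 0 < y < z /\
    exists w, F0 mu sigma (fun x => k3 * x) x0 c1 y z = Fin w /\ w < eps.
Proof.
  intros Hmu Hsigma Hx0 Hz [L HL] eps Heps.
  destruct (HL 1 ltac:(lra)) as [delta [Hdelta Hnear]].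
  set (C := 2 / (sigma ^ 2 + 2 * mu)).
  set (N := Rabs L + 1 + Rabs (k3 / mu * z)).
  assert (HC : 0 < C) by (assert (0 < sigma ^ 2) by (apply pow_lt; lra);
                          apply Rdiv_lt_0_compat; lra).
  destruct (ln_gap_large (N / (C * eps)) z Hz) as [y0 [Hy0 Hgap]].
  set (y := Rmin y0 (delta / 2)).
  assert (Hy : 0 < y <= y0 /\ y < delta) by
    (unfold y, Rmin; destruct Rle_dec; lra).
  destruct (Hnear y ltac:(lra) ltac:(lra)) as [c [Hc Hcl]].
  exists y; split; [lra |].
  rewrite (F0_gbm mu sigma x0 Hmu Hsigma Hx0 k3 c1 y z c ltac:(lra) ltac:(lra) Hc).
  eexists; split; [reflexivity |]; fold C.
  specialize (Hgap y ltac:(lra)).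
  assert (Hnum : c + k3 / mu * (z - y) < N).
  { unfold N; pose proof (Rle_abs (c - L)); pose proof (Rle_abs L).
    pose proof (Rle_abs (k3 / mu * (z - y))).
    assert (Rabs (k3 / mu * (z - y)) <= Rabs (k3 / mu * z)).
    { rewrite !Rabs_mult; apply Rmult_le_compat_l; [apply Rabs_pos |].
      rewrite !Rabs_right; lra. }
    lra. }
  assert (Hden : N < eps * (C * (ln z - ln y))).
  { apply Rmult_lt_compat_l with (r := C * eps) in Hgap; [| nra].
    replace (C * eps * (N / (C * eps))) with N in Hgap by (field; lra).
    lra. }
  assert (ln y < ln z) by (apply ln_increasing; lra).
  apply Rlt_div_l; [apply Rmult_lt_0_compat; lra | lra].
Qed.

Theorem theorem6p7 (mu sigma k1 k3 x0 : R) (c1 : R -> R -> ER) :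
  0 < mu -> 0 < sigma -> 0 < k3 -> 0 < k1 -> 0 < x0 ->
  c1_continuous c1 ->
  (forall y z, 0 < y -> y <= z -> ER_le (Fin k1) (c1 y z)) ->
  c1_C1_near0 c1 ->
  c1_C1_nearInf c1 ->
  (exists z, 0 < z /\ c1_finite_limit0 c1 z) ->
  let F := F0 mu sigma (fun x => k3 * x) x0 c1 in
  ((forall y z, 0 < y -> y <= z -> ER_le (Fin 0) (F y z)) /\
   (forall eps, 0 < eps -> exists y z, 0 < y /\ y <= z /\ ER_le (F y z) (Fin eps) /\ F y z <> Fin eps)) /\
  ~ (exists y z, 0 < y /\ y < z /\
       forall y' z', 0 < y' -> y' <= z' -> ER_le (F y z) (F y' z')).
Proof.
  intros Hmu Hsigma Hk3 Hk1 Hx0 _ Hk1_le _ _ [z [Hz Hlim]] F.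
  assert (Hc1 : forall y z, 0 < y -> y <= z -> ER_le (Fin 0) (c1 y z)).
  { intros y z' Hy Hyz; specialize (Hk1_le y z' Hy Hyz).
    destruct (c1 y z'); simpl in *; lra. }
  assert (Hpos : forall y z, 0 < y /\ y <= z -> ER_pos (F y z))
    by (intros y z' [Hy Hyz]; apply F0_gbm_pos; auto).
  assert (Hsmall : forall eps, 0 < eps -> exists y z', (0 < y /\ y <= z') /\
                     exists w, F y z' = Fin w /\ w < eps).
  { intros eps Heps.
    destruct (F0_gbm_vanishes mu sigma k3 x0 c1 z Hmu Hsigma Hx0 Hz Hlim eps Heps)
      as [y [Hy Hw]].
    exists y, z; split; [lra | exact Hw]. }
  split; [split |].
  - intros y z' Hy Hyz; apply ER_pos_ge0, Hpos; auto.
  - intros eps Heps; destruct (Hsmall eps Heps) as [y [z' [[Hy Hyz] [w [E Hw]]]]].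
    exists y, z'; rewrite E; repeat split; auto; [simpl; lra | intro E'; injection E'; lra].
  - intros [y [z' [Hy [Hyz Hmin]]]].
    destruct (ER_pos_inf_not_attained _ F Hpos Hsmall y z' ltac:(lra))
      as [y' [z'' [[Hy' Hyz'] Hnot]]].
    exact (Hnot (Hmin y' z'' Hy' Hyz')).
Qed.
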